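(* Let $B$ be a skew brace with multiplicative identity $1$ and $\mathrm{T}(B)$ its associated near-truss. Let $P$ be a non-empty subset of $B$. Then $P$ is a paragon in $\mathrm{T}(B)$ if and only if, for all $p\in P$, the set $P_p^1:=\{[q,p,1]\mid q\in P\}=\{q-p+1\mid q\in P\}$ is an ideal in $B$.
   Context: A skew brace is $(B,+,\cdot)$ with $(B,+)$ and $(B,\cdot)$ groups and $a(b+c)=ab-a+ac$. An ideal of a skew brace $B$ is a subset $B'$ such that $(B',+)$ is a normal subgroup of $(B,+)$, $aB'=B'a$ for all $a\in B$, and $ab-a\in B'$ for all $a\in B$, $b\in B'$. $\mathrm{T}(B)$ is $B$ with ternary operation $[a,b,c]=a-b+c$ and the multiplication of $B$. A normal sub-heap is a non-empty subset $S$ closed under $[-,-,-]$ with $[[a,e,s],a,e]\in S$ for all $a$ and $e,s\in S$; $a\sim_S b$ iff $[a,b,s]\in S$ for some (equivalently all) $s\in S$. A sub-heap $S$ is closed if $[ts',ts,s]\in S$ and $[s't,st,s]\in S$ for all $s,s'\in S$, $t$. A paragon is a non-empty normal sub-heap $P$ all of whose $\sim_P$-classes are closed sub-heaps. *)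

Set Implicit Arguments.

Record skew_brace := SkewBrace {
  car :> Type;
  sadd : car -> car -> car;
  sopp : car -> car;
  szero : car;
  smul : car -> car -> car;
  sinv : car -> car;
  sone : car;
  sadd_assoc : forall a b c, sadd a (sadd b c) = sadd (sadd a b) c;
  sadd_0l : forall a, sadd szero a = a;
  sadd_0r : forall a, sadd a szero = a;
  sadd_Nl : forall a, sadd (sopp a) a = szero;
  sadd_Nr : forall a, sadd a (sopp a) = szero;
  smul_assoc : forall a b c, smul a (smul b c) = smul (smul a b) c;
  smul_1l : forall a, smul sone a = a;
  smul_1r : forall a, smul a sone = a;
  smul_Vl : forall a, smul (sinv a) a = sone;
  smul_Vr : forall a, smul a (sinv a) = sone;
  sbrace : forall a b c,
    smul a (sadd b c) = sadd (sadd (smul a b) (sopp a)) (smul a c)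
}.

Arguments sadd {s} _ _.
Arguments sopp {s} _.
Arguments smul {s} _ _.
Arguments sinv {s} _.

Section Defs.
Variable B : skew_brace.

Definition subset := B -> Prop.

Definition is_ideal (I : subset) : Prop :=
  I (szero B) /\
  (forall x y, I x -> I y -> I (sadd x y)) /\
  (forall x, I x -> I (sopp x)) /\
  (forall a x, I x -> I (sadd (sadd a x) (sopp a))) /\
  (forall a, forall y, (exists x, I x /\ y = smul a x) <->
                       (exists x, I x /\ y = smul x a)) /\
  (forall a b, I b -> I (sadd (smul a b) (sopp a))).

Definition tern (a b c : B) : B := sadd (sadd a (sopp b)) c.

Definition sub_heap (S : subset) : Prop :=
  forall a b c, S a -> S b -> S c -> S (tern a b c).

Definition normal_sub_heap (S : subset) : Prop :=
  (exists s, S s) /\ sub_heap S /\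
  (forall a e s, S e -> S s -> S (tern (tern a e s) a e)).

Definition heap_rel (S : subset) (a b : B) : Prop :=
  exists s, S s /\ S (tern a b s).

Definition closed_sub_heap (S : subset) : Prop :=
  sub_heap S /\
  (forall s s' t, S s -> S s' ->
     S (tern (smul t s') (smul t s) s) /\ S (tern (smul s' t) (smul s t) s)).

Definition heap_class (S : subset) (a : B) : subset := fun b => heap_rel S b a.

Definition paragon (P : subset) : Prop :=
  normal_sub_heap P /\ (forall a, closed_sub_heap (heap_class P a)).

Definition P_p1 (P : subset) (p : B) : subset :=
  fun x => exists q, P q /\ x = tern q p (sone B).

End Defs.

From Stdlib Require Import Setoid.

Local Set Implicit Arguments.
Local Unset Strict Implicit.

(* In a skew brace [1 = 0], because [1 * (0 + 0) = 1 * 0 - 1 + 1 * 0]; hence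
   [P_p^1 = P - p].  If [p ∈ P], the normal sub-heaps containing [p] are exactly
   the cosets [N + p] of normal subgroups [N] of [(B,+)], with [N = P - p], and
   the [~_P]-classes are the cosets [N + a].  Closedness of the class [N] itself
   says that [N] is stable under [b ↦ ab - a] and [b ↦ ba - a], and these two
   stabilities together give [aN = Na]; conversely, the cosets of an ideal are
   congruence classes for multiplication on either side, hence closed. *)

Declare Scope brace_scope.
Local Notation "0" := (szero _) : brace_scope.
Local Notation "- a" := (sopp a) : brace_scope.
Local Notation "a + b" := (sadd a b) : brace_scope.
Local Notation "a - b" := (sadd a (sopp b)) : brace_scope.
Local Notation "a * b" := (smul a b) : brace_scope.
Local Open Scope brace_scope.

Section SkewBrace.
Variable B : skew_brace.
Implicit Types a b c e s t x y z : B.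

Lemma sadd_assocr a b c : a + b + c = a + (b + c).
Proof. symmetry; apply sadd_assoc. Qed.

Lemma saddKr a b : - a + (a + b) = b.
Proof. rewrite sadd_assoc, sadd_Nl, sadd_0l; reflexivity. Qed.

Lemma saddNKr a b : a + (- a + b) = b.
Proof. rewrite sadd_assoc, sadd_Nr, sadd_0l; reflexivity. Qed.

Lemma sopp_unique a b : a + b = 0 -> b = - a.
Proof. intros E; rewrite <- (saddKr a b), E, sadd_0r; reflexivity. Qed.

Lemma sopp_involutive a : - - a = a.
Proof. symmetry; apply sopp_unique, sadd_Nl. Qed.

Lemma sopp_add a b : - (a + b) = - b + - a.
Proof.
  symmetry; apply sopp_unique.
  rewrite sadd_assocr, (sadd_assoc _ b), sadd_Nr, sadd_0l, sadd_Nr; reflexivity.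
Qed.

Lemma sopp_zero : - szero B = 0.
Proof. symmetry; apply sopp_unique, sadd_0l. Qed.

Lemma sone_zero : sone B = 0.
Proof.
  pose proof (sbrace _ (sone B) 0 0) as E.
  rewrite !smul_1l, !sadd_0l, sadd_0r in E.
  rewrite <- (sopp_involutive (sone B)), <- E, sopp_zero; reflexivity.
Qed.

Lemma smul_0r a : a * 0 = a.
Proof.
  pose proof (f_equal (fun x => x - a * 0) (sbrace _ a 0 0)) as E; simpl in E.
  rewrite sadd_0l, sadd_Nr, !sadd_assocr, sadd_Nr, sadd_0r in E.
  rewrite <- (sopp_involutive (a * 0)), <- (sopp_unique (eq_sym E)).
  apply sopp_involutive.
Qed.

Lemma smul_0l a : 0 * a = a.
Proof. rewrite <- sone_zero; apply smul_1l. Qed.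

Hint Rewrite sadd_assocr saddKr saddNKr sadd_Nr sadd_Nl sadd_0l sadd_0r
  sopp_involutive sopp_add sopp_zero sone_zero smul_0r smul_0l : skew_brace.

Ltac brace_simpl := autorewrite with skew_brace in *.

Lemma smul_subr t x y : t * x - t * y = t * (x - y) - t.
Proof.
  pose proof (sbrace _ t (x - y) y) as E; brace_simpl.
  rewrite E; brace_simpl; reflexivity.
Qed.

Lemma smul_lambda_sub t x y : t * y = sone B -> t * x = t * (x - y) - t.
Proof. intros E; rewrite <- smul_subr, E; brace_simpl; reflexivity. Qed.

Definition lambda_stable (I : subset B) : Prop := forall a b, I b -> I (a * b - a).
Definition rho_stable (I : subset B) : Prop := forall a b, I b -> I (b * a - a).

Lemma lambda_rho_stable_coset_eq (I : subset B) :
  lambda_stable I -> rho_stable I ->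
  forall a y, (exists x, I x /\ y = a * x) <-> (exists x, I x /\ y = x * a).
Proof.
  intros hl hr a y; split; intros (x & Ix & ->).
  - exists (a * (x * sinv a)); split.
    + rewrite (smul_lambda_sub (x * sinv a) (smul_Vr _ a)); apply hl, hr, Ix.
    + rewrite <- !smul_assoc, smul_Vl, smul_1r; reflexivity.
  - exists (sinv a * (x * a)); split.
    + rewrite (smul_lambda_sub (x * a) (smul_Vl _ a)); apply hl, hr, Ix.
    + rewrite smul_assoc, smul_Vr, smul_1l; reflexivity.
Qed.

Definition rcoset (I : subset B) a : subset B := fun x => I (x - a).

Section Subgroup.
Variable I : subset B.
Hypothesis I_add : forall x y, I x -> I y -> I (x + y).
Hypothesis I_opp : forall x, I x -> I (- x).

Lemma rcoset_sub a x y : rcoset I a x -> rcoset I a y -> I (x - y).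
Proof.
  intros Hx Hy; pose proof (I_add Hx (I_opp Hy)) as X.
  brace_simpl; exact X.
Qed.

Lemma rcoset_sub_heap a : sub_heap (rcoset I a).
Proof.
  intros x y z Hx Hy Hz.
  pose proof (I_add (I_add Hx (I_opp Hy)) Hz) as X.
  unfold rcoset, tern; brace_simpl; exact X.
Qed.

End Subgroup.

Section Ideal.
Variable I : subset B.
Hypothesis hI : is_ideal I.

Lemma ideal_add x y : I x -> I y -> I (x + y).
Proof. apply hI. Qed.

Lemma ideal_opp x : I x -> I (- x).
Proof. apply hI. Qed.

Lemma ideal_lambda_stable : lambda_stable I.
Proof. unfold lambda_stable; apply hI. Qed.

Lemma ideal_rmul_as_lmul a x : I x -> exists x', I x' /\ x * a = a * x'.
Proof.
  intros Ix; destruct hI as (_ & _ & _ & _ & Hcoset & _).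
  destruct (proj2 (Hcoset a (x * a)) (ex_intro _ x (conj Ix eq_refl)))
    as (x' & Ix' & E).
  exists x'; split; [exact Ix' | exact E].
Qed.

Lemma ideal_ldiv x y : I (x - y) -> I (sinv y * x).
Proof.
  intros Ixy; rewrite (smul_lambda_sub x (smul_Vl _ y)).
  apply ideal_lambda_stable, Ixy.
Qed.

Lemma ideal_congr_mull t x y : I (x - y) -> I (t * x - t * y).
Proof. intros Ixy; rewrite smul_subr; apply ideal_lambda_stable, Ixy. Qed.

(* With [k = y⁻¹x ∈ I] and [kt = tk'], [k' ∈ I], we get [xt = (yt)k']. *)
Lemma ideal_congr_mulr t x y : I (x - y) -> I (x * t - y * t).
Proof.
  intros Ixy.
  destruct (ideal_rmul_as_lmul t (ideal_ldiv Ixy)) as (k' & Ik' & E).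
  assert (Ext : x * t = y * t * k').
  { rewrite <- !smul_assoc, <- E, !smul_assoc, smul_Vr, smul_1l; reflexivity. }
  rewrite Ext; apply ideal_lambda_stable, Ik'.
Qed.

Lemma rcoset_closed_sub_heap a : closed_sub_heap (rcoset I a).
Proof.
  split; [apply (rcoset_sub_heap ideal_add ideal_opp) |].
  intros s s' t Hs Hs'.
  pose proof (rcoset_sub ideal_add ideal_opp Hs' Hs) as Hss.
  split; unfold rcoset, tern; rewrite sadd_assocr; apply ideal_add; try exact Hs.
  - exact (ideal_congr_mull t Hss).
  - exact (ideal_congr_mulr t Hss).
Qed.

End Ideal.

Lemma is_ideal_ext (I J : subset B) :
  (forall x, I x <-> J x) -> is_ideal I -> is_ideal J.
Proof. intros E HI; unfold is_ideal in *; setoid_rewrite <- E; exact HI. Qed.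

Lemma closed_sub_heap_ext (S S' : subset B) :
  (forall x, S x <-> S' x) -> closed_sub_heap S -> closed_sub_heap S'.
Proof.
  intros E HS; unfold closed_sub_heap, sub_heap in *; setoid_rewrite <- E; exact HS.
Qed.

Definition translate (P : subset B) p : subset B := fun x => P (x + p).

Section Paragon.
Variable P : subset B.
Variable p : B.
Hypothesis Pp : P p.

Local Notation N := (translate P p).

Lemma rcoset_translate x : rcoset N p x <-> P x.
Proof. unfold rcoset, translate; brace_simpl; apply iff_refl. Qed.

Section SubHeap.
Hypothesis SH : sub_heap P.

Lemma translate_add x y : N x -> N y -> N (x + y).
Proof.
  intros Hx Hy; pose proof (SH Hx Pp Hy) as X.
  unfold translate, tern in *; brace_simpl; exact X.
Qed.

Lemma translate_opp x : N x -> N (- x).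
Proof.
  intros Hx; pose proof (SH Pp Hx Pp) as X.
  unfold translate, tern in *; brace_simpl; exact X.
Qed.

Lemma heap_class_translate a b : heap_class P a b <-> rcoset N a b.
Proof.
  unfold heap_class, heap_rel, rcoset, translate; split.
  - intros (s & Ps & Hs); pose proof (SH Hs Ps Pp) as X.
    unfold tern in X; brace_simpl; exact X.
  - intros X; exists p; split; [exact Pp |].
    unfold tern; brace_simpl; exact X.
Qed.

Lemma normal_sub_heap_translate :
  (forall a e s, P e -> P s -> P (tern _ (tern _ a e s) a e)) <->
  (forall a x, N x -> N (a + x - a)).
Proof.
  split.
  - intros NC a x Hx; pose proof (NC (a + p) _ _ Pp Hx) as X.
    unfold translate, tern in *; brace_simpl; exact X.
  - intros Hconj a e s Pe Ps.
    apply rcoset_translate in Pe, Ps.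
    pose proof (rcoset_sub translate_add translate_opp Ps Pe) as Nse.
    pose proof (translate_add (Hconj (a - e) _ Nse) Pe) as X.
    apply rcoset_translate; unfold rcoset, tern in *; brace_simpl; exact X.
Qed.

End SubHeap.

Lemma translate_ideal_of_paragon : paragon P -> is_ideal N.
Proof.
  intros ((_ & SH & NC) & CL).
  assert (class0 : forall x, heap_class P 0 x <-> N x).
  { intros x; rewrite (heap_class_translate SH); unfold rcoset; brace_simpl.
    apply iff_refl. }
  assert (N0 : N 0) by (unfold translate; brace_simpl; exact Pp).
  destruct (CL 0) as [_ CL0].
  assert (hl : lambda_stable N).
  { intros a b Nb; rewrite <- class0 in N0, Nb.
    pose proof (proj1 (CL0 _ _ a N0 Nb)) as X.
    rewrite class0 in X; unfold tern in X; brace_simpl; exact X. }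
  assert (hr : rho_stable N).
  { intros a b Nb; rewrite <- class0 in N0, Nb.
    pose proof (proj2 (CL0 _ _ a N0 Nb)) as X.
    rewrite class0 in X; unfold tern in X; brace_simpl; exact X. }
  refine (conj N0 (conj (translate_add SH) (conj (translate_opp SH)
    (conj _ (conj (lambda_rho_stable_coset_eq hl hr) hl))))).
  exact (proj1 (normal_sub_heap_translate SH) NC).
Qed.

Lemma paragon_of_translate_ideal : is_ideal N -> paragon P.
Proof.
  intros hI.
  assert (SH : sub_heap P).
  { intros a b c Pa Pb Pc; rewrite <- rcoset_translate in *.
    apply (rcoset_sub_heap (ideal_add hI) (ideal_opp hI)); assumption. }
  split; [split; [exists p; exact Pp | split; [exact SH |]] |].
  - apply (normal_sub_heap_translate SH), hI.
  - intros a.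
    apply (closed_sub_heap_ext (fun b => iff_sym (heap_class_translate SH a b))).
    exact (rcoset_closed_sub_heap hI a).
Qed.

Lemma P_p1_translate x : P_p1 P p x <-> N x.
Proof.
  unfold P_p1, translate, tern; split.
  - intros (q & Pq & ->); brace_simpl; exact Pq.
  - intros X; exists (x + p); split; [exact X | brace_simpl; reflexivity].
Qed.

End Paragon.

End SkewBrace.

Theorem lemma3p16 (B : skew_brace) (P : B -> Prop) (hP : exists x, P x) :
  paragon P <-> (forall p, P p -> is_ideal (P_p1 P p)).
Proof.
  split.
  - intros Par p Pp.
    apply (is_ideal_ext (fun x => iff_sym (P_p1_translate P p x))).
    exact (translate_ideal_of_paragon Pp Par).
  - intros Hideal; destruct hP as (p & Pp).
    apply (paragon_of_translate_ideal Pp), (is_ideal_ext (P_p1_translate P p)).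
    exact (Hideal p Pp).
Qed.
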